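(* The assignment sending a locally persistent category $\mathcal D$ to the pair $(\mathsf C^{\mathcal D},\mathrm W^{\mathcal D})$, and a locally persistent functor $F:\mathcal D\to\mathcal E$ to $F_*$ defined by $F_*(A)=F(A)$, $F_*((g,s))=(F(g),s)$, $F_*(\alpha_{g,h})=\alpha_{F(g),F(h)}$, defines a faithful functor from the category $\mathsf{LPC}$ of locally persistent categories and locally persistent functors to the category $\mathsf{W2Cat}$ of 2-weighted 2-categories and Lipschitz 2-functors. Moreover, for every locally persistent category $\mathcal D$ and all $A,B\in\mathcal D_0$, $d_{\mathcal D}(A,B)=d_{\mathsf C^{\mathcal D},\mathrm W^{\mathcal D}}(A,B)$.
   Context: A locally persistent category (LPC) $\mathcal D$ is a category enriched in $\mathsf{Fun}(\mathsf R,\mathsf{Set})$ ($\mathsf R$ the poset $\mathbb R_{\ge0}$, with Day convolution for addition). Explicitly: a class of objects $\mathcal D_0$; for $A,B$ and $s\ge0$ sets $\mathcal D_1(A,B)_s$ with shift maps $\mathrm S_{s,t}:\mathcal D_1(A,B)_s\to\mathcal D_1(A,B)_t$ for $s\le t$, $\mathrm S_{s,s}=\mathrm{id}$, $\mathrm S_{t,u}\mathrm S_{s,t}=\mathrm S_{s,u}$; associative compositions $\mathcal D_1(B,C)_t\times\mathcal D_1(A,B)_s\to\mathcal D_1(A,C)_{s+t}$, $(h,g)\mapsto hg$; identities $1_A\in\mathcal D_1(A,A)_0$ that are two-sided units; and $\mathrm S_{t,t'}(h)\mathrm S_{s,s'}(g)=\mathrm S_{s+t,s'+t'}(hg)$.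 A locally persistent functor $F:\mathcal D\to\mathcal E$ is a functor mapping $\mathcal D_1(A,B)_s\to\mathcal E_1(F(A),F(B))_s$, preserving composition and identities, with $\mathrm S_{s,t}(F(g))=F(\mathrm S_{s,t}(g))$. LPC interleaving: $A,B$ are $(s,t)$-interleaved if there are $f\in\mathcal D_1(A,B)_s$, $g\in\mathcal D_1(B,A)_t$ with $gf=\mathrm S_{0,s+t}(1_A)$ and $fg=\mathrm S_{0,s+t}(1_B)$; $d_{\mathcal D}(A,B)=\inf\max\{s,t\}$ over such. The 2-category $\mathsf C^{\mathcal D}$: objects $\mathcal D_0$; 1-morphisms $A\to B$ are pairs $(g,s)$ with $g\in\mathcal D_1(A,B)_s$; $(h,t)\circ(g,s)=(hg,s+t)$, identity $(1_A,0)$; between $(g,s)$ and $(h,t)$ there is a unique 2-morphism $\alpha_{g,h}$ iff $s\le t$ and $\mathrm S_{s,t}(g)=h$, otherwise none; $\alpha_{g,h}\alpha_{f,g}=\alpha_{f,h}$, $\alpha_{h,k}\bullet\alpha_{f,g}=\alpha_{hf,kg}$. $\mathrm W^{\mathcal D}_1((g,s))=s$, $\mathrm W^{\mathcal D}_2\equiv0$. A 2-weighted 2-category is a 2-category with $\mathrm W_1,\mathrm W_2\ge0$ on 1- and 2-morphisms, zero on identities, subadditive under composition of 1-morphisms and vertical/horizontal composition of 2-morphisms; a Lipschitz 2-functor $\Theta$ between them satisfies $\mathrm W'_1(\Theta(g))\le\mathrm W_1(g)$ and $\mathrm W'_2(\Theta(\alpha))\le\mathrm W_2(\alpha)$. The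 interleaving distance of a 2-weighted 2-category is $d_{\mathsf C,\mathrm W}(A,B)=\inf\max\{\mathrm W_1(g),\mathrm W_1(h),\mathrm W_2(\alpha),\mathrm W_2(\beta)\}$ over $g:A\to B$, $h:B\to A$, $\alpha:1_A\Rightarrow hg$, $\beta:1_B\Rightarrow gh$. Infima of empty sets are $\infty$. *)

From Stdlib Require Import Reals Lra.
From Coquelicot Require Import Coquelicot.
Open Scope R_scope.

Record nnR := NNR { nnval :> R; nnpos : 0 <= nnval }.
Definition nn0 : nnR := NNR 0 (Rle_refl 0).
Definition nnplus (s t : nnR) : nnR :=
  NNR (s + t) (Rplus_le_le_0_compat _ _ (nnpos s) (nnpos t)).
Definition nn0_le (s : nnR) : nn0 <= s := nnpos s.

Record LPC := {
  lobj : Type;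
  lhom : lobj -> lobj -> nnR -> Type;
  lshift : forall (A B : lobj) (s t : nnR), s <= t -> lhom A B s -> lhom A B t;
  lcomp : forall (A B C : lobj) (s t : nnR), lhom B C t -> lhom A B s -> lhom A C (nnplus s t);
  lid : forall A : lobj, lhom A A nn0;
  lshift_id : forall A B (s : nnR) (p : s <= s) (g : lhom A B s), lshift A B s s p g = g;
  lshift_shift : forall A B (s t u : nnR) (p : s <= t) (q : t <= u) (r : s <= u) (g : lhom A B s),
      lshift A B t u q (lshift A B s t p g) = lshift A B s u r g;
  lcomp_assoc : forall A B C D (s t u : nnR)
      (h : lhom C D u) (g : lhom B C t) (f : lhom A B s),
      existT (lhom A D) _ (lcomp A C D (nnplus s t) u h (lcomp A B C s t g f))
      = existT (lhom A D) _ (lcomp A B D s (nnplus t u) (lcomp B C D t u h g) f);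
  lcomp_id_l : forall A B (s : nnR) (g : lhom A B s),
      existT (lhom A B) _ (lcomp A B B s nn0 (lid B) g) = existT (lhom A B) s g;
  lcomp_id_r : forall A B (s : nnR) (g : lhom A B s),
      existT (lhom A B) _ (lcomp A A B nn0 s g (lid A)) = existT (lhom A B) s g;
  lcomp_shift : forall A B C (s s' t t' : nnR) (p : s <= s') (q : t <= t')
      (r : nnplus s t <= nnplus s' t') (h : lhom B C t) (g : lhom A B s),
      lcomp A B C s' t' (lshift B C t t' q h) (lshift A B s s' p g)
      = lshift A C (nnplus s t) (nnplus s' t') r (lcomp A B C s t h g)
}.
Arguments lhom D A B s : rename.
Arguments lshift D {A B s t} p g : rename.
Arguments lcomp D {A B C s t} h g : rename.
Arguments lid D A : rename.

Record LPCFun (D E : LPC) := {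
  fobj : lobj D -> lobj E;
  fhom : forall A B (s : nnR), lhom D A B s -> lhom E (fobj A) (fobj B) s;
  fhom_comp : forall A B C (s t : nnR) (h : lhom D B C t) (g : lhom D A B s),
      fhom A C _ (lcomp D h g) = lcomp E (fhom B C t h) (fhom A B s g);
  fhom_id : forall A, fhom A A nn0 (lid D A) = lid E (fobj A);
  fhom_shift : forall A B (s t : nnR) (p : s <= t) (g : lhom D A B s),
      lshift E p (fhom A B s g) = fhom A B t (lshift D p g)
}.
Arguments fobj {D E} F A : rename.
Arguments fhom {D E} F {A B s} g : rename.

Definition LPCFun_eq (D E : LPC) (F G : LPCFun D E) : Prop :=
  (forall A, fobj F A = fobj G A) /\
  (forall A B (s : nnR) (g : lhom D A B s),
      existT (fun XY : lobj E * lobj E => lhom E (fst XY) (snd XY) s)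
             (fobj F A, fobj F B) (fhom F g)
      = existT (fun XY : lobj E * lobj E => lhom E (fst XY) (snd XY) s)
             (fobj G A, fobj G B) (fhom G g)).

Definition LPCFun_id (D : LPC) : LPCFun D D.
Proof.
  refine {| fobj := fun A => A; fhom := fun A B s g => g |}; reflexivity.
Defined.

Definition LPCFun_comp (D E K : LPC) (G : LPCFun E K) (F : LPCFun D E) : LPCFun D K.
Proof.
  refine {| fobj := fun A => fobj G (fobj F A);
            fhom := fun A B s g => fhom G (fhom F g) |}.
  - intros. rewrite fhom_comp. apply fhom_comp.
  - intros. rewrite fhom_id. apply fhom_id.
  - intros. rewrite fhom_shift. f_equal. apply fhom_shift.
Defined.

Definition lpc_interleaved (D : LPC) (A B : lobj D) (s t : nnR)
    (f : lhom D A B s) (g : lhom D B A t) : Prop :=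
  lcomp D g f = lshift D (nn0_le (nnplus s t)) (lid D A) /\
  lcomp D f g = lshift D (nn0_le (nnplus t s)) (lid D B).

Definition d_LPC (D : LPC) (A B : lobj D) : Rbar :=
  Glb_Rbar (fun r => exists (s t : nnR) (f : lhom D A B s) (g : lhom D B A t),
                lpc_interleaved D A B s t f g /\ r = Rmax s t).

Record W2Raw := {
  wob : Type;
  wh1 : wob -> wob -> Type;
  wh2 : forall A B, wh1 A B -> wh1 A B -> Type;
  wid1 : forall A, wh1 A A;
  wc1 : forall A B C, wh1 B C -> wh1 A B -> wh1 A C;
  wid2 : forall A B (f : wh1 A B), wh2 A B f f;
  wvc : forall A B (f g h : wh1 A B), wh2 A B g h -> wh2 A B f g -> wh2 A B f h;
  whc : forall A B C (f f' : wh1 A B) (g g' : wh1 B C),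
      wh2 B C g g' -> wh2 A B f f' -> wh2 A C (wc1 A B C g f) (wc1 A B C g' f');
  wW1 : forall A B, wh1 A B -> R;
  wW2 : forall A B (f g : wh1 A B), wh2 A B f g -> R
}.
Arguments wh1 C A B : rename.
Arguments wh2 C {A B} f g : rename.
Arguments wid1 C A : rename.
Arguments wc1 C {A B C0} g f : rename.
Arguments wid2 C {A B} f : rename.
Arguments wvc C {A B f g h} b a : rename.
Arguments whc C {A B C0 f f' g g'} b a : rename.
Arguments wW1 C {A B} f : rename.
Arguments wW2 C {A B f g} a : rename.

Definition pk2 (C : W2Raw) (A B : wob C) (f g : wh1 C A B) (a : wh2 C f g) :=
  existT (fun p : wh1 C A B * wh1 C A B => wh2 C (fst p) (snd p)) (f, g) a.
Arguments pk2 C {A B f g} a.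

Definition is_W2Cat (C : W2Raw) : Prop :=
  (forall A B X Y (h : wh1 C X Y) (g : wh1 C B X) (f : wh1 C A B),
      wc1 C h (wc1 C g f) = wc1 C (wc1 C h g) f) /\
  (forall A B (f : wh1 C A B), wc1 C (wid1 C B) f = f) /\
  (forall A B (f : wh1 C A B), wc1 C f (wid1 C A) = f) /\
  (forall A B (f g h k : wh1 C A B) (c : wh2 C h k) (b : wh2 C g h) (a : wh2 C f g),
      wvc C c (wvc C b a) = wvc C (wvc C c b) a) /\
  (forall A B (f g : wh1 C A B) (a : wh2 C f g), wvc C (wid2 C g) a = a) /\
  (forall A B (f g : wh1 C A B) (a : wh2 C f g), wvc C a (wid2 C f) = a) /\
  (forall A B X Y (f f' : wh1 C A B) (g g' : wh1 C B X) (h h' : wh1 C X Y)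
      (c : wh2 C h h') (b : wh2 C g g') (a : wh2 C f f'),
      pk2 C (whc C c (whc C b a)) = pk2 C (whc C (whc C c b) a)) /\
  (forall A B (f f' : wh1 C A B) (a : wh2 C f f'),
      pk2 C (whc C (wid2 C (wid1 C B)) a) = pk2 C a) /\
  (forall A B (f f' : wh1 C A B) (a : wh2 C f f'),
      pk2 C (whc C a (wid2 C (wid1 C A))) = pk2 C a) /\
  (forall A B X (f : wh1 C A B) (g : wh1 C B X),
      whc C (wid2 C g) (wid2 C f) = wid2 C (wc1 C g f)) /\
  (forall A B X (f f' f'' : wh1 C A B) (g g' g'' : wh1 C B X)
      (b' : wh2 C g' g'') (b : wh2 C g g') (a' : wh2 C f' f'') (a : wh2 C f f'),
      whc C (wvc C b' b) (wvc C a' a) = wvc C (whc C b' a') (whc C b a)) /\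
  (forall A B (f : wh1 C A B), 0 <= wW1 C f) /\
  (forall A, wW1 C (wid1 C A) = 0) /\
  (forall A B X (g : wh1 C B X) (f : wh1 C A B),
      wW1 C (wc1 C g f) <= wW1 C g + wW1 C f) /\
  (forall A B (f g : wh1 C A B) (a : wh2 C f g), 0 <= wW2 C a) /\
  (forall A B (f : wh1 C A B), wW2 C (wid2 C f) = 0) /\
  (forall A B (f g h : wh1 C A B) (b : wh2 C g h) (a : wh2 C f g),
      wW2 C (wvc C b a) <= wW2 C b + wW2 C a) /\
  (forall A B X (f f' : wh1 C A B) (g g' : wh1 C B X) (b : wh2 C g g') (a : wh2 C f f'),
      wW2 C (whc C b a) <= wW2 C b + wW2 C a).

Record W2Fun (C D : W2Raw) := {
  F0 : wob C -> wob D;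
  F1 : forall A B, wh1 C A B -> wh1 D (F0 A) (F0 B);
  F2 : forall A B (f g : wh1 C A B), wh2 C f g -> wh2 D (F1 A B f) (F1 A B g)
}.
Arguments F0 {C D} F A : rename.
Arguments F1 {C D} F {A B} f : rename.
Arguments F2 {C D} F {A B f g} a : rename.

Definition is_L2F (C D : W2Raw) (F : W2Fun C D) : Prop :=
  (forall A, F1 F (wid1 C A) = wid1 D (F0 F A)) /\
  (forall A B X (g : wh1 C B X) (f : wh1 C A B),
      F1 F (wc1 C g f) = wc1 D (F1 F g) (F1 F f)) /\
  (forall A B (f : wh1 C A B), F2 F (wid2 C f) = wid2 D (F1 F f)) /\
  (forall A B (f g h : wh1 C A B) (b : wh2 C g h) (a : wh2 C f g),
      F2 F (wvc C b a) = wvc D (F2 F b) (F2 F a)) /\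
  (forall A B X (f f' : wh1 C A B) (g g' : wh1 C B X) (b : wh2 C g g') (a : wh2 C f f'),
      pk2 D (F2 F (whc C b a)) = pk2 D (whc D (F2 F b) (F2 F a))) /\
  (forall A B (f : wh1 C A B), wW1 D (F1 F f) <= wW1 C f) /\
  (forall A B (f g : wh1 C A B) (a : wh2 C f g), wW2 D (F2 F a) <= wW2 C a).

Definition W2Fun_id (C : W2Raw) : W2Fun C C :=
  {| F0 := fun A => A; F1 := fun A B f => f; F2 := fun A B f g a => a |}.

Definition W2Fun_comp (C D K : W2Raw) (G : W2Fun D K) (F : W2Fun C D) : W2Fun C K :=
  {| F0 := fun A => F0 G (F0 F A);
     F1 := fun A B f => F1 G (F1 F f);
     F2 := fun A B f g a => F2 G (F2 F a) |}.

Definition W2Fun_eq (C D : W2Raw) (F G : W2Fun C D) : Prop :=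
  (forall A, F0 F A = F0 G A) /\
  (forall A B (f : wh1 C A B),
      existT (fun XY : wob D * wob D => wh1 D (fst XY) (snd XY)) (F0 F A, F0 F B) (F1 F f)
      = existT (fun XY : wob D * wob D => wh1 D (fst XY) (snd XY)) (F0 G A, F0 G B) (F1 G f)) /\
  (forall A B (f g : wh1 C A B) (a : wh2 C f g),
      existT (fun XY : wob D * wob D =>
                {p : wh1 D (fst XY) (snd XY) * wh1 D (fst XY) (snd XY) & wh2 D (fst p) (snd p)})
             (F0 F A, F0 F B) (existT _ (F1 F f, F1 F g) (F2 F a))
      = existT (fun XY : wob D * wob D =>
                {p : wh1 D (fst XY) (snd XY) * wh1 D (fst XY) (snd XY) & wh2 D (fst p) (snd p)})
             (F0 G A, F0 G B) (existT _ (F1 G f, F1 G g) (F2 G a))).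

Definition d_W2 (C : W2Raw) (A B : wob C) : Rbar :=
  Glb_Rbar (fun r => exists (g : wh1 C A B) (h : wh1 C B A)
                            (a : wh2 C (wid1 C A) (wc1 C h g))
                            (b : wh2 C (wid1 C B) (wc1 C g h)),
                r = Rmax (Rmax (wW1 C g) (wW1 C h)) (Rmax (wW2 C a) (wW2 C b))).

(* 1-morphisms A -> B: pairs (s, g) with g in D_1(A,B)_s.
   2-morphisms (g,s) => (h,t): a proof that s <= t and S_{s,t} g = h
   (unique up to proof irrelevance). *)
Definition CD_h1 (D : LPC) (A B : lobj D) : Type := {s : nnR & lhom D A B s}.
Definition CD_h2 (D : LPC) (A B : lobj D) (f g : CD_h1 D A B) : Type :=
  {p : projT1 f <= projT1 g | lshift D p (projT2 f) = projT2 g}.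

Definition CD_id2 (D : LPC) A B (f : CD_h1 D A B) : CD_h2 D A B f f :=
  exist _ (Rle_refl _) (lshift_id D A B _ _ _).

Definition CD_vc (D : LPC) A B (f g h : CD_h1 D A B)
  (b : CD_h2 D A B g h) (a : CD_h2 D A B f g) : CD_h2 D A B f h.
Proof.
  refine (exist _ (Rle_trans _ _ _ (proj1_sig a) (proj1_sig b)) _).
  rewrite <- (lshift_shift D A B _ _ _ (proj1_sig a) (proj1_sig b)).
  rewrite (proj2_sig a). exact (proj2_sig b).
Defined.

Definition CD_c1 (D : LPC) A B X (g : CD_h1 D B X) (f : CD_h1 D A B) : CD_h1 D A X :=
  existT _ (nnplus (projT1 f) (projT1 g)) (lcomp D (projT2 g) (projT2 f)).

Definition CD_hc (D : LPC) A B X (f f' : CD_h1 D A B) (g g' : CD_h1 D B X)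
  (b : CD_h2 D B X g g') (a : CD_h2 D A B f f') :
  CD_h2 D A X (CD_c1 D A B X g f) (CD_c1 D A B X g' f').
Proof.
  refine (exist _ (Rplus_le_compat _ _ _ _ (proj1_sig a) (proj1_sig b)) _).
  simpl.
  rewrite <- (lcomp_shift D A B X _ _ _ _ (proj1_sig a) (proj1_sig b)).
  rewrite (proj2_sig a), (proj2_sig b). reflexivity.
Defined.

Definition CD (D : LPC) : W2Raw :=
  {| wob := lobj D;
     wh1 := CD_h1 D;
     wh2 := CD_h2 D;
     wid1 := fun A => existT _ nn0 (lid D A);
     wc1 := CD_c1 D;
     wid2 := CD_id2 D;
     wvc := CD_vc D;
     whc := CD_hc D;
     wW1 := fun A B f => nnval (projT1 f);
     wW2 := fun A B f g a => 0 |}.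

Definition Fstar_F2 (D E : LPC) (F : LPCFun D E) A B (f g : CD_h1 D A B)
  (a : CD_h2 D A B f g) :
  CD_h2 E (fobj F A) (fobj F B) (existT _ (projT1 f) (fhom F (projT2 f)))
                                (existT _ (projT1 g) (fhom F (projT2 g))).
Proof.
  refine (exist _ (proj1_sig a) _). simpl.
  rewrite (fhom_shift _ _ F). f_equal. exact (proj2_sig a).
Defined.

Definition Fstar (D E : LPC) (F : LPCFun D E) : W2Fun (CD D) (CD E) :=
  @Build_W2Fun (CD D) (CD E) (fobj F)
     (fun A B (f : CD_h1 D A B) =>
        (existT _ (projT1 f) (fhom F (projT2 f)) : CD_h1 E (fobj F A) (fobj F B)))
     (Fstar_F2 D E F).

From Stdlib Require Import Reals.
From Coquelicot Require Import Coquelicot.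
From Stdlib Require Import Lra ProofIrrelevance Eqdep.

(* C^D is thin: a 2-cell is a proof of an inequality together with an equation, so
   by proof irrelevance any two parallel 2-cells coincide and every 2-dimensional
   coherence law holds automatically.  The 1-dimensional laws are those of D, and
   the weights are subadditive because grades add under composition.  A 2-cell
   1_A => (g f, s + t) is exactly the equation g f = S_{0,s+t}(1_A), and 2-cells
   weigh nothing, so interleavings in D and in (C^D, W^D) are the same data with the
   same cost.  F_* is faithful because F_*(g, s) = (F g, s) records F g. *)

Lemma existT_swap_inj (X Y : Type) (P : X -> Y -> Type) x x' y (p : P x y) (p' : P x' y) :
  existT (fun x => {y & P x y}) x (existT _ y p) = existT _ x' (existT _ y p') ->
  existT (fun x => P x y) x p = existT (fun x => P x y) x' p'.
Proof.
  intros H.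
  apply (f_equal (fun w : {x & {y & P x y}} =>
           existT (fun y => {x & P x y}) (projT1 (projT2 w))
                  (existT (fun x => P x (projT1 (projT2 w))) (projT1 w) (projT2 (projT2 w))))) in H.
  exact (inj_pair2 _ _ _ _ _ H).
Qed.

Section ThinTwoCategory.

Variable D : LPC.

Lemma lshift_irrelevant A B (s t : nnR) (p q : s <= t) (g : lhom D A B s) :
  lshift D p g = lshift D q g.
Proof. now rewrite (proof_irrelevance _ p q). Qed.

Lemma CD_h2_eq A B (f g : CD_h1 D A B) (a b : CD_h2 D A B f g) : a = b.
Proof.
  destruct a as [p Hp], b as [q Hq].
  destruct (proof_irrelevance _ p q).
  f_equal. apply proof_irrelevance.
Qed.

Lemma pk2_CD_eq A B (f1 f2 g1 g2 : CD_h1 D A B)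
    (a : CD_h2 D A B f1 g1) (b : CD_h2 D A B f2 g2) :
  f1 = f2 -> g1 = g2 -> pk2 (CD D) (f := f1) (g := g1) a = pk2 (CD D) (f := f2) (g := g2) b.
Proof. intros -> ->. unfold pk2. f_equal. apply CD_h2_eq. Qed.

Lemma CD_c1_assoc A B X Y (h : CD_h1 D X Y) (g : CD_h1 D B X) (f : CD_h1 D A B) :
  CD_c1 D A X Y h (CD_c1 D A B X g f) = CD_c1 D A B Y (CD_c1 D B X Y h g) f.
Proof. destruct f, g, h. apply lcomp_assoc. Qed.

Lemma CD_c1_id_l A B (f : CD_h1 D A B) : CD_c1 D A B B (existT _ nn0 (lid D B)) f = f.
Proof. destruct f. apply lcomp_id_l. Qed.

Lemma CD_c1_id_r A B (f : CD_h1 D A B) : CD_c1 D A A B f (existT _ nn0 (lid D A)) = f.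
Proof. destruct f. apply lcomp_id_r. Qed.

Local Ltac c1_law := first [apply CD_c1_assoc | apply CD_c1_id_l | apply CD_c1_id_r].

Lemma CD_is_W2Cat : is_W2Cat (CD D).
Proof.
  repeat split; intros; simpl.
  all: first [ apply CD_h2_eq | apply nnpos | lra | c1_law | apply pk2_CD_eq; c1_law ].
Qed.

End ThinTwoCategory.

Section PushForward.

Variables D E : LPC.

Lemma Fstar_c1 (F : LPCFun D E) A B X (g : CD_h1 D B X) (f : CD_h1 D A B) :
  F1 (Fstar D E F) (CD_c1 D A B X g f)
  = CD_c1 E _ _ _ (F1 (Fstar D E F) g) (F1 (Fstar D E F) f).
Proof. destruct f, g. cbn. now rewrite fhom_comp. Qed.

Lemma Fstar_is_L2F (F : LPCFun D E) : is_L2F (CD D) (CD E) (Fstar D E F).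
Proof.
  repeat split; intros; simpl.
  all: try first [apply CD_h2_eq | apply Rle_refl].
  - now rewrite fhom_id.
  - apply Fstar_c1.
  - apply pk2_CD_eq; apply Fstar_c1.
Qed.

Lemma W2Fun_eq_into_CD (C : W2Raw) (o : wob C -> lobj E)
    (f1 g1 : forall A B, wh1 C A B -> CD_h1 E (o A) (o B))
    (f2 : forall A B f g, wh2 C f g -> CD_h2 E (o A) (o B) (f1 A B f) (f1 A B g))
    (g2 : forall A B f g, wh2 C f g -> CD_h2 E (o A) (o B) (g1 A B f) (g1 A B g)) :
  (forall A B f, f1 A B f = g1 A B f) ->
  W2Fun_eq C (CD E) (Build_W2Fun C (CD E) o f1 f2) (Build_W2Fun C (CD E) o g1 g2).
Proof.
  intros Hf1. split; [reflexivity|]. split; intros A B f; simpl.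
  - now rewrite Hf1.
  - intros g a. generalize (f2 A B f g a) (g2 A B f g a).
    rewrite (Hf1 A B f), (Hf1 A B g). intros a1 a2.
    do 2 f_equal. apply CD_h2_eq.
Qed.

Lemma Fstar_faithful (F G : LPCFun D E) :
  W2Fun_eq (CD D) (CD E) (Fstar D E F) (Fstar D E G) -> LPCFun_eq D E F G.
Proof.
  intros [Hobj [Hhom _]]. split; [exact Hobj|].
  intros A B s g.
  exact (existT_swap_inj _ _ (fun XY t => lhom E (fst XY) (snd XY) t) _ _ _ _ _
           (Hhom A B (existT _ s g))).
Qed.

End PushForward.

Lemma Fstar_id (D : LPC) :
  W2Fun_eq (CD D) (CD D) (Fstar D D (LPCFun_id D)) (W2Fun_id (CD D)).
Proof. apply W2Fun_eq_into_CD. now intros A B []. Qed.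

Lemma Fstar_comp (D E K : LPC) (G : LPCFun E K) (F : LPCFun D E) :
  W2Fun_eq (CD D) (CD K) (Fstar D K (LPCFun_comp D E K G F))
           (W2Fun_comp (CD D) (CD E) (CD K) (Fstar E K G) (Fstar D E F)).
Proof. now apply W2Fun_eq_into_CD. Qed.

Section Interleaving.

Variable D : LPC.

Lemma CD_h2_from_id_iff A (u : nnR) (h : lhom D A A u) :
  inhabited (CD_h2 D A A (existT _ nn0 (lid D A)) (existT _ u h))
  <-> h = lshift D (nn0_le u) (lid D A).
Proof.
  split.
  - intros [[p Hp]]. simpl in *. rewrite <- Hp. apply lshift_irrelevant.
  - intros Hh. exact (inhabits (exist _ (nn0_le u) (eq_sym Hh))).
Qed.

Lemma Rmax_Rmax_0_0 (s t : R) : 0 <= s -> Rmax (Rmax s t) (Rmax 0 0) = Rmax s t.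
Proof.
  intros Hs. rewrite (Rmax_left 0 0) by lra.
  apply Rmax_left. apply Rle_trans with s; [exact Hs | apply Rmax_l].
Qed.

Lemma d_LPC_eq_d_W2_CD (A B : lobj D) : d_LPC D A B = d_W2 (CD D) A B.
Proof.
  apply Glb_Rbar_eqset. intro r. split.
  - intros (s & t & f & g & [Hgf Hfg] & ->).
    destruct (proj2 (CD_h2_from_id_iff A _ _) Hgf) as [a].
    destruct (proj2 (CD_h2_from_id_iff B _ _) Hfg) as [b].
    exists (existT _ s f), (existT _ t g), a, b.
    symmetry. apply Rmax_Rmax_0_0, nnpos.
  - intros ([s f] & [t g] & a & b & ->).
    exists s, t, f, g. split.
    + split; apply CD_h2_from_id_iff; constructor; assumption.
    + apply Rmax_Rmax_0_0, nnpos.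
Qed.

End Interleaving.

Theorem theorem5p25 :
  (* D |-> (C^D, W^D) lands in 2-weighted 2-categories *)
  (forall D : LPC, is_W2Cat (CD D)) /\
  (* F |-> F_* lands in Lipschitz 2-functors *)
  (forall (D E : LPC) (F : LPCFun D E), is_L2F (CD D) (CD E) (Fstar D E F)) /\
  (* functoriality: identities *)
  (forall D : LPC, W2Fun_eq (CD D) (CD D) (Fstar D D (LPCFun_id D)) (W2Fun_id (CD D))) /\
  (* functoriality: composition *)
  (forall (D E K : LPC) (G : LPCFun E K) (F : LPCFun D E),
      W2Fun_eq (CD D) (CD K) (Fstar D K (LPCFun_comp D E K G F))
               (W2Fun_comp (CD D) (CD E) (CD K) (Fstar E K G) (Fstar D E F))) /\
  (* faithfulness *)
  (forall (D E : LPC) (F G : LPCFun D E),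
      W2Fun_eq (CD D) (CD E) (Fstar D E F) (Fstar D E G) -> LPCFun_eq D E F G) /\
  (* equality of interleaving distances *)
  (forall (D : LPC) (A B : lobj D), d_LPC D A B = d_W2 (CD D) A B).
Proof.
  exact (conj CD_is_W2Cat (conj Fstar_is_L2F (conj Fstar_id (conj Fstar_comp
           (conj Fstar_faithful d_LPC_eq_d_W2_CD))))).
Qed.
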